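(* Let $\mathbf{A}$ be a finite algebra with a Mal'cev term and let $0\in A$. Then $\mathbf{A}$ is supernilpotent if and only if there is a positive integer $d$ such that for every $m$, every polynomial $f(x_1,\ldots,x_m)\in\operatorname{Pol}_m(\mathbf{A})$ and every tuple $\bar r\in A^m$ there is an index set $T\subseteq[m]$ with $|T|\le d$ and $f(\bar r)=f(\bar r_T)$.
   Context: A Mal'cev term $m$ satisfies $m(y,x,x)=m(x,x,y)=y$. $\operatorname{Pol}_m(\mathbf{A})$ is the set of $m$-ary polynomial operations of $\mathbf{A}$. For congruences $\alpha_1,\ldots,\alpha_n$, the higher commutator $[\alpha_1,\ldots,\alpha_n]$ is the smallest congruence $\delta$ such that for all polynomials $f(\bar x_1,\ldots,\bar x_n)$ and tuples $\bar a_i\equiv_{\alpha_i}\bar b_i$: if $f(\bar a_1,\bar x_2,\ldots,\bar x_n)\equiv_\delta f(\bar b_1,\bar x_2,\ldots,\bar x_n)$ for all $(\bar x_2,\ldots,\bar x_n)\in\prod_{i=2}^n\{\bar a_i,\bar b_i\}\setminus\{(\bar b_2,\ldots,\bar b_n)\}$, then $f(\bar a_1,\bar b_2,\ldots,\bar b_n)\equiv_\delta f(\bar b_1,\bar b_2,\ldots,\bar b_n)$. $\mathbf{A}$ is supernilpotent if $[\mathbf{1}_A,\ldots,\mathbf{1}_A]$ (with $n+1$ entries) equals the identity relation $\mathbf{0}_A$ for some $n$. $[m]=\{1,\ldots,m\}$; $\bar r_T$ is the $m$-tuple with $i$-th entry $r_i$ if $i\in T$ and $0$ otherwise. *)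

From mathcomp Require Import all_boot.
Set Implicit Arguments. Unset Strict Implicit. Unset Printing Implicit Defensive.

Record alg (A : Type) := Alg {
  sym : Type;
  arity : sym -> nat;
  op : forall i : sym, ('I_(arity i) -> A) -> A
}.

Inductive term (A : Type) (Al : alg A) (V : Type) : Type :=
| Var : V -> term Al V
| App : forall i : sym Al, ('I_(arity i) -> term Al V) -> term Al V.

Fixpoint eval (A : Type) (Al : alg A) (V : Type) (env : V -> A) (t : term Al V) : A :=
  match t with
  | Var v => env v
  | App i ts => @op A Al i (fun j => eval env (ts j))
  end.

(* Polynomial operations with variables indexed by V: term operations in which
   constants from A may be substituted (variables of type V + A). *)
Definition is_pol (A : Type) (Al : alg A) (V : Type) (f : (V -> A) -> A) : Prop :=
  exists t : term Al (V + A),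
    forall x : V -> A,
      f x = eval (fun v => match v with inl u => x u | inr c => c end) t.

Definition Pol (A : Type) (Al : alg A) (m : nat) (f : ('I_m -> A) -> A) : Prop :=
  is_pol Al f.

Definition env3 (A : Type) (x y w : A) : 'I_3 -> A :=
  fun i => match nat_of_ord i with 0 => x | 1 => y | _ => w end.

Definition has_malcev (A : Type) (Al : alg A) : Prop :=
  exists m : term Al 'I_3,
    forall x y : A, eval (env3 y x x) m = y /\ eval (env3 x x y) m = y.

Definition is_cong (A : Type) (Al : alg A) (R : A -> A -> Prop) : Prop :=
  [/\ forall x, R x x,
      forall x y, R x y -> R y x,
      forall x y z, R x y -> R y z -> R x z &
      forall (i : sym Al) (x y : 'I_(arity i) -> A),
        (forall j, R (x j) (y j)) -> R (@op A Al i x) (@op A Al i y)].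

Definition sel (A : Type) (n : nat) (k : 'I_n.+1 -> nat)
  (a b : forall i : 'I_n.+1, 'I_(k i) -> A) (s : 'I_n.+1 -> bool)
  : {i : 'I_n.+1 & 'I_(k i)} -> A :=
  fun v => if s (tag v) then b (tag v) (tagged v) else a (tag v) (tagged v).

Definition upd0 (n : nat) (s : 'I_n.+1 -> bool) (c : bool) : 'I_n.+1 -> bool :=
  fun i => if i == ord0 then c else s i.

(* Term condition: delta satisfies the condition in the definition of
   [alpha_0, ..., alpha_n] (blocks indexed 0..n, block 0 is the "first" one). *)
Definition TC (A : Type) (Al : alg A) (n : nat) (alpha : 'I_n.+1 -> A -> A -> Prop)
  (delta : A -> A -> Prop) : Prop :=
  forall (k : 'I_n.+1 -> nat) (f : ({i : 'I_n.+1 & 'I_(k i)} -> A) -> A),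
    is_pol Al f ->
    forall a b : forall i : 'I_n.+1, 'I_(k i) -> A,
      (forall i j, alpha i (a i j) (b i j)) ->
      (forall s : 'I_n.+1 -> bool,
          (exists i : 'I_n.+1, i != ord0 /\ s i = false) ->
          delta (f (sel a b (upd0 s false))) (f (sel a b (upd0 s true)))) ->
      delta (f (sel a b (fun i => i != ord0))) (f (sel a b (fun _ => true))).

Definition hcomm (A : Type) (Al : alg A) (n : nat) (alpha : 'I_n.+1 -> A -> A -> Prop)
  : A -> A -> Prop :=
  fun x y => forall delta, is_cong Al delta -> TC Al alpha delta -> delta x y.

Definition full_rel (A : Type) : A -> A -> Prop := fun _ _ => True.

(* Supernilpotent: [1_A, ..., 1_A] (n+1 entries) = 0_A for some n. *)
Definition supernilpotent (A : Type) (Al : alg A) : Prop :=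
  exists n : nat, forall x y : A,
    hcomm Al (fun _ : 'I_n.+1 => @full_rel A) x y <-> x = y.

(* r_T : entries r_i for i in T, and 0 (= z) otherwise. *)
Definition restr (A : Type) (m : nat) (z : A) (r : 'I_m -> A) (T : {set 'I_m}) : 'I_m -> A :=
  fun i => if i \in T then r i else z.

From mathcomp Require Import all_boot zify.
From Stdlib Require Import FunctionalExtensionality IndefiniteDescription.
Set Implicit Arguments. Unset Strict Implicit. Unset Printing Implicit Defensive.

(* If [1_A, ..., 1_A] (n+1 entries) is trivial, the term condition holds with
   equality for every polynomial; for [X |-> f (r_X)] it becomes a condition on
   cubes of subsets of [m]. By Ramsey's theorem, on a large set U the value of
   [f (r_(U \ Y))] depends only on [|Y|] for small Y; a repetition in this
   sequence of values, propagated downwards by the cube condition, gives a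
   nonempty C with [f (r_(U \ C)) = f (r_U)], so U shrinks to bounded size.
   Conversely, iterated Mal'cev differences turn a polynomial f satisfying the
   hypotheses of the term condition into one that agrees with f at the top
   vertex and takes the base value as soon as one block is reset to [a]. Each
   coordinate is then interpolated between [a] and [b] by a polynomial in two
   new variables that gives [a] when both are [0]; a bound d on essential arity
   keeps at most d new variables away from [0], so one of the d+1 blocks is
   reset and the top value equals the base value. *)

Section Polynomials.
Variables (A : Type) (Al : alg A).

Fixpoint subst_term (V W : Type) (s : V -> term Al W) (t : term Al V) : term Al W :=
  match t with
  | Var v => s v
  | App i ts => App (fun j => subst_term s (ts j))
  end.

Lemma eval_subst_term V W (s : V -> term Al W) (env : W -> A) t :
  eval env (subst_term s t) = eval (fun v => eval env (s v)) t.
Proof.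
elim: t => [v|i ts IH] //=.
by f_equal; apply: functional_extensionality => j; apply: IH.
Qed.

Lemma is_pol_comp V W (g : (V -> A) -> A) (s : V -> (W -> A) -> A) :
  is_pol Al g -> (forall v, is_pol Al (s v)) -> is_pol Al (fun y => g (fun v => s v y)).
Proof.
move=> [t gt] /functional_choice [ts sts].
exists (subst_term (fun u => match u with inl v => ts v | inr c => Var Al (inr c) end) t).
move=> y; rewrite eval_subst_term gt; f_equal.
by apply: functional_extensionality => -[v|c] //=; rewrite sts.
Qed.

Lemma is_pol_var V (v : V) : is_pol Al (fun x : V -> A => x v).
Proof. by exists (Var Al (inl v)). Qed.

Lemma is_pol_const V (c : A) : is_pol Al (fun _ : V -> A => c).
Proof. by exists (Var Al (inr c)). Qed.

Lemma is_pol_eval3 (t : term Al 'I_3) V (g1 g2 g3 : (V -> A) -> A) :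
  is_pol Al g1 -> is_pol Al g2 -> is_pol Al g3 ->
  is_pol Al (fun x => eval (env3 (g1 x) (g2 x) (g3 x)) t).
Proof.
move=> g1_pol g2_pol g3_pol.
have t_pol : is_pol Al (fun x : 'I_3 -> A => eval x t).
  by exists (subst_term (fun i => Var Al (inl i)) t) => x; rewrite eval_subst_term.
apply: (is_pol_comp t_pol (s := fun i y => env3 (g1 y) (g2 y) (g3 y) i)) => i.
by rewrite /env3; case: (nat_of_ord i) => [|[|j]].
Qed.

Lemma bounded_arity_fin (z : A) n :
  (forall m (g : ('I_m -> A) -> A), Pol Al g -> forall r : 'I_m -> A,
     exists T : {set 'I_m}, #|T| <= n /\ g r = g (restr z r T)) ->
  forall (J : finType) (g : (J -> A) -> A), is_pol Al g -> forall r : J -> A,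
    exists2 T : {set J}, #|T| <= n & g r = g (fun j => if j \in T then r j else z).
Proof.
move=> bounded J g g_pol r.
have g'_pol : Pol Al (fun y : 'I_#|J| -> A => g (fun j => y (enum_rank j))).
  by apply: is_pol_comp g_pol _ => j; apply: is_pol_var.
have [T' [T'_small gT']] := bounded _ _ g'_pol (fun i => r (enum_val i)).
exists (enum_val @: T'); first exact: leq_trans (leq_imset_card _ _) T'_small.
transitivity (g (fun j => r (enum_val (enum_rank j)))).
  by f_equal; apply: functional_extensionality => j; rewrite enum_rankK.
rewrite gT' /restr; f_equal; apply: functional_extensionality => j.
by rewrite -[in RHS](enum_rankK j) mem_imset ?enum_rankK //; apply: enum_val_inj.
Qed.

End Polynomials.

Lemma exists_notin_imset (I J : finType) (h : I -> J) (T : {set I}) :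
  #|T| < #|J| -> exists j, j \notin h @: T.
Proof.
move=> T_small; have /subsetPn [j _ hj] : ~~ ([set: J] \subset h @: T).
  apply: contraTN T_small => /subset_leq_card; rewrite cardsT -leqNgt => J_small.
  exact: leq_trans J_small (leq_imset_card _ _).
by exists j.
Qed.

Lemma cardsU_disjoint (I : finType) (X Y : {set I}) :
  [disjoint X & Y] -> #|X :|: Y| = #|X| + #|Y|.
Proof. by move=> XY; apply/eqP; rewrite (leq_card_setU X Y).2. Qed.

Definition prefix_set (I : finType) (H : {set I}) (l : nat) : {set I} :=
  [set x in take l (enum H)].

Lemma prefix_set_sub (I : finType) (H : {set I}) l : prefix_set H l \subset H.
Proof. by apply/subsetP => x; rewrite inE => /mem_take; rewrite mem_enum. Qed.

Lemma card_prefix_set (I : finType) (H : {set I}) l : l <= #|H| -> #|prefix_set H l| = l.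
Proof.
move=> l_le; rewrite /prefix_set cardsE (card_uniqP _) ?take_uniq ?enum_uniq //.
by rewrite size_take -cardE; case: ltnP => // H_le; apply/eqP; rewrite eqn_leq H_le l_le.
Qed.

Definition TC_eq (A : Type) (Al : alg A) (n : nat) :=
  TC Al (fun _ : 'I_n.+1 => @full_rel A) (@eq A).

Lemma is_cong_eq (A : Type) (Al : alg A) : is_cong Al (@eq A).
Proof.
split=> //; first exact: @etrans.
by move=> i x y /functional_extensionality ->.
Qed.

Lemma hcomm_full_eqP (A : Type) (Al : alg A) n :
  (forall x y : A, hcomm Al (fun _ : 'I_n.+1 => @full_rel A) x y <-> x = y) <-> TC_eq Al n.
Proof.
split=> [comm0 k f f_pol a b _ f_cube | tc x y].
  apply/comm0 => delta [delta_refl _ _ _] delta_tc.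
  by apply: (delta_tc k f f_pol a b) => // s s_ne; rewrite f_cube.
split=> [comm_xy | <- delta [delta_refl _ _ _] _ //]; exact: comm_xy (is_cong_eq Al) tc.
Qed.

Lemma supernilpotentE (A : Type) (Al : alg A) :
  supernilpotent Al <-> exists n, TC_eq Al n.
Proof. by split=> -[n sn]; exists n; apply/hcomm_full_eqP. Qed.

(** * Bounded essential arity implies supernilpotence *)

Section MalcevDifference.
Variables (A : Type) (Al : alg A) (mt : term Al 'I_3).
Hypothesis mt_malcev : forall x y : A, eval (env3 y x x) mt = y /\ eval (env3 x x y) mt = y.

Definition malcev (x y w : A) := eval (env3 x y w) mt.

Lemma malcev_yxx x y : malcev y x x = y. Proof. exact: (mt_malcev x y).1. Qed.
Lemma malcev_xxy x y : malcev x x y = y. Proof. exact: (mt_malcev x y).2. Qed.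

Lemma is_pol_malcev V (g1 g2 g3 : (V -> A) -> A) :
  is_pol Al g1 -> is_pol Al g2 -> is_pol Al g3 ->
  is_pol Al (fun x => malcev (g1 x) (g2 x) (g3 x)).
Proof. exact: is_pol_eval3. Qed.

Variables (n : nat) (k : 'I_n.+1 -> nat) (a b : forall i : 'I_n.+1, 'I_(k i) -> A).
Local Notation V := {i : 'I_n.+1 & 'I_(k i)}.
Local Notation top := (sel a b (fun _ => true)).

Definition reset (i : 'I_n.+1) (x : V -> A) : V -> A :=
  fun v => if tag v == i then a (tagged v) else x v.

Lemma reset_sel i s : reset i (sel a b s) = sel a b (fun j => if j == i then false else s j).
Proof. by apply: functional_extensionality => v; rewrite /reset /sel; case: (tag v == i). Qed.

Lemma reset_idem i x : reset i (reset i x) = reset i x.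
Proof. by apply: functional_extensionality => v; rewrite /reset; case: (tag v == i). Qed.

Lemma reset_comm i j x : reset i (reset j x) = reset j (reset i x).
Proof.
apply: functional_extensionality => v; rewrite /reset.
by case: (tag v == i); case: (tag v == j).
Qed.

Lemma is_pol_reset i (g : (V -> A) -> A) : is_pol Al g -> is_pol Al (fun x => g (reset i x)).
Proof.
move=> g_pol; apply: (is_pol_comp g_pol (s := fun v x => reset i x v)) => v.
by rewrite /reset; case: (tag v == i); [exact: is_pol_const | exact: is_pol_var].
Qed.

Variable f : (V -> A) -> A.
Hypothesis f_pol : is_pol Al f.
Hypothesis f_cube : forall s, (exists i, i != ord0 /\ s i = false) ->
  f (sel a b (upd0 s false)) = f (sel a b (upd0 s true)).
Local Notation base := (f (sel a b (fun i => i != ord0))).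

(* A Mal'cev difference, with [base] in the role of zero. *)
Definition mdiff (i : 'I_n.+1) (g : (V -> A) -> A) (x : V -> A) : A :=
  malcev (g x) (g (reset i x)) base.

Definition peaks_at_top (g : (V -> A) -> A) :=
  g top = f top /\ forall s, ~~ [forall i, s i] -> g (sel a b s) = base.

Definition absorbs (i : 'I_n.+1) (g : (V -> A) -> A) := forall x, g (reset i x) = base.

Lemma peaks_at_top_mdiff0 : peaks_at_top (mdiff ord0 f).
Proof.
split; rewrite /mdiff.
  rewrite reset_sel.
  have -> : (fun j : 'I_n.+1 => if j == ord0 then false else true) = (fun j => j != ord0).
    by apply: functional_extensionality => j; case: (j == ord0).
  by rewrite malcev_yxx.
move=> s /forallPn [i si]; rewrite reset_sel; case s0: (s ord0); last first.
  have -> : (fun j : 'I_n.+1 => if j == ord0 then false else s j) = s.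
    by apply: functional_extensionality => j; case: eqP => // ->.
  by rewrite malcev_xxy.
have i_ne0 : i != ord0 by apply: contraNneq si => ->; rewrite s0.
rewrite [X in f (sel a b X)](_ : s = upd0 s true); last first.
  by apply: functional_extensionality => j; rewrite /upd0; case: eqP => // ->.
rewrite -f_cube; last by exists i; rewrite /upd0 (negbTE i_ne0) (negbTE si).
exact: malcev_xxy.
Qed.

Lemma peaks_at_top_mdiff i g : peaks_at_top g -> peaks_at_top (mdiff i g).
Proof.
have reset_not_top s : ~~ [forall j, (if j == i then false else s j)].
  by apply/forallPn; exists i; rewrite eqxx.
move=> [g_top g_below]; split=> [|s s_below]; rewrite /mdiff reset_sel.
  by rewrite g_top g_below ?malcev_yxx.
by rewrite !g_below ?malcev_yxx.
Qed.

Lemma absorbs_mdiff i g : absorbs i (mdiff i g).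
Proof. by move=> x; rewrite /mdiff reset_idem malcev_xxy. Qed.

Lemma absorbs_mdiffW i j g : absorbs j g -> absorbs j (mdiff i g).
Proof. by move=> g_abs x; rewrite /mdiff reset_comm !g_abs malcev_yxx. Qed.

Lemma is_pol_mdiff i g : is_pol Al g -> is_pol Al (mdiff i g).
Proof.
move=> g_pol; apply: is_pol_malcev => //; [exact: is_pol_reset | exact: is_pol_const].
Qed.

Definition peak := foldr mdiff (mdiff ord0 f) (enum 'I_n.+1).

Lemma peak_spec : [/\ is_pol Al peak, peaks_at_top peak & forall i, absorbs i peak].
Proof.
suff /(_ (enum 'I_n.+1)) [peak_pol peak_top peak_abs] : forall l,
    [/\ is_pol Al (foldr mdiff (mdiff ord0 f) l), peaks_at_top (foldr mdiff (mdiff ord0 f) l)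
      & forall i, i \in l -> absorbs i (foldr mdiff (mdiff ord0 f) l)].
  by split=> // i; apply: peak_abs; rewrite mem_enum.
elim=> [|j l [IH_pol IH_top IH_abs]] /=.
  by split=> //; [exact: is_pol_mdiff | exact: peaks_at_top_mdiff0].
split; [exact: is_pol_mdiff | exact: peaks_at_top_mdiff |].
move=> i; rewrite inE => /predU1P [-> | i_l]; first exact: absorbs_mdiff.
exact/absorbs_mdiffW/IH_abs.
Qed.

Variable z : A.
Hypothesis bounded : forall (J : finType) (g : (J -> A) -> A), is_pol Al g -> forall r : J -> A,
  exists2 T : {set J}, #|T| <= n & g r = g (fun j => if j \in T then r j else z).

(* Feed [peak] the coordinates [interp u w v], which is [a v] at [u = w = z] and
   [b v] at [u = a v, w = b v]: setting all but [n] of the [2 #|V|] new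
   variables to [z] leaves some block entirely at [a], which [peak] absorbs. *)
Lemma top_eq_base : f top = base.
Proof.
have [peak_pol [peak_top _] peak_abs] := peak_spec.
pose interp u w (v : V) := malcev (malcev z u (a (tagged v))) z w.
pose Q (y : V + V -> A) := peak (fun v => interp (y (inl v)) (y (inr v)) v).
have Q_pol : is_pol Al Q.
  apply: (is_pol_comp peak_pol) => v.
  apply: is_pol_malcev; [|exact: is_pol_const|exact: is_pol_var].
  by apply: is_pol_malcev; [exact: is_pol_const|exact: is_pol_var|exact: is_pol_const].
pose r (j : V + V) := match j with inl v => a (tagged v) | inr v => b (tagged v) end.
have Q_top : Q r = f top.
  rewrite /Q -peak_top; congr peak; apply: functional_extensionality => v.
  by rewrite /interp malcev_yxx malcev_xxy.
rewrite -Q_top; have [T T_small ->] := bounded Q_pol r.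
pose block (j : V + V) := match j with inl v => tag v | inr v => tag v end.
have [i0 i0_free] : exists i0, i0 \notin block @: T.
  by apply: exists_notin_imset; rewrite card_ord ltnS.
rewrite /Q; set x := (X in peak X).
have -> : x = reset i0 x.
  apply: functional_extensionality => v; rewrite /reset; case: eqP => // v_i0.
  have free j : block j = i0 -> j \notin T.
    by move=> j_i0; apply: contra i0_free => jT; apply/imsetP; exists j.
  by rewrite /x /interp !ifN ?free // malcev_xxy malcev_yxx.
by rewrite peak_abs.
Qed.

End MalcevDifference.

Lemma TC_eq_of_bounded_arity (A : Type) (Al : alg A) (z : A) n :
  has_malcev Al ->
  (forall (J : finType) (g : (J -> A) -> A), is_pol Al g -> forall r : J -> A,
     exists2 T : {set J}, #|T| <= n & g r = g (fun j => if j \in T then r j else z)) ->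
  TC_eq Al n.
Proof.
move=> [mt mt_malcev] bounded k f f_pol a b _ f_cube.
by rewrite (top_eq_base mt_malcev f_pol f_cube bounded).
Qed.

(** * Supernilpotence implies bounded essential arity *)

(* [beta] sorts elements into the blocks [0..n] of a cube; elements outside
   every block are in all vertices of the cube when in [S], in none otherwise. *)
Definition cube_set (I : finType) n (beta : I -> option 'I_n.+1) (S : {set I})
  (s : 'I_n.+1 -> bool) : {set I} :=
  [set j | if beta j is Some i then s i else j \in S].

Definition set_TC (A : Type) (I : finType) (n : nat) (F : {set I} -> A) :=
  forall (beta : I -> option 'I_n.+1) S, (forall s, (exists i, i != ord0 /\ s i = false) ->
     F (cube_set beta S (upd0 s false)) = F (cube_set beta S (upd0 s true))) ->
  F (cube_set beta S (fun i => i != ord0)) = F (cube_set beta S (fun _ => true)).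

Lemma set_TC_restr (A : Type) (Al : alg A) n (z : A) m (r : 'I_m -> A) (f : ('I_m -> A) -> A) :
  TC_eq Al n -> Pol Al f -> set_TC n (fun X => f (restr z r X)).
Proof.
move=> tc f_pol beta S F_cube.
pose g (x : {i : 'I_n.+1 & 'I_m} -> A) :=
  f (fun j => if beta j is Some i then x (existT _ i j) else if j \in S then r j else z).
have g_pol : is_pol Al g.
  apply: (is_pol_comp f_pol) => j.
  by case: (beta j) => [i|]; [exact: is_pol_var | exact: is_pol_const].
have g_sel s : g (sel (fun _ _ => z) (fun _ j => r j) s) = f (restr z r (cube_set beta S s)).
  congr f; apply: functional_extensionality => j.
  by rewrite /restr /sel inE /=; case: (beta j).
rewrite -!g_sel; apply: (tc (fun _ => m) g g_pol) => // s s_ne.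
by rewrite !g_sel; exact: F_cube.
Qed.

Section Ramsey.
Variable A : finType.

Definition homogeneous (I : finType) (c : {set I} -> A) (H : {set I}) (l : nat) :=
  forall Y1 Y2 : {set I}, Y1 \subset H -> Y2 \subset H -> #|Y1| = l -> #|Y2| = l -> c Y1 = c Y2.

Definition min_homogeneous (I : finType) (c : {set I} -> A) (V : {set I}) (l : nat)
  (rho : I -> nat) (chi : I -> A) :=
  forall (Y : {set I}) v, Y \subset V -> #|Y| = l.+1 -> v \in Y ->
    (forall y, y \in Y -> rho v <= rho y) -> c Y = chi v.

Definition ramsey_prop (l : nat) := forall h, exists N,
  forall (I : finType) (c : {set I} -> A) (W : {set I}), N <= #|W| ->
  exists H : {set I}, [/\ H \subset W, h <= #|H| & homogeneous c H l].

Lemma min_homogeneous_add (I : finType) (c : {set I} -> A) l (H V : {set I}) v rho chi :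
  V \subset H -> homogeneous (fun Y => c (v |: Y)) H l ->
  min_homogeneous c V l rho chi ->
  min_homogeneous c (v |: V) l (fun x => if x == v then 0 else (rho x).+1)
    (fun x => if x == v then c (v |: prefix_set H l) else chi x).
Proof.
move=> VH H_hom V_min Y u YvV Y_card uY u_min.
case: (boolP (v \in Y)) => vY.
  have -> : u = v by apply: contraTeq (u_min v vY) => /negbTE ->; rewrite eqxx.
  have YvH : Y :\ v \subset H.
    apply/subsetP => x /setD1P [xv xY].
    by move: (subsetP YvV x xY); rewrite in_setU1 (negbTE xv) => /(subsetP VH).
  have Yv_card : #|Y :\ v| = l by apply/eqP; rewrite -eqSS -Y_card (cardsD1 v Y) vY.
  rewrite eqxx -(setD1K vY); apply: H_hom => //; first exact: prefix_set_sub.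
  by apply: card_prefix_set; rewrite -Yv_card subset_leq_card.
have ne_v y : y \in Y -> (y == v) = false by move=> yY; apply: contraNF vY => /eqP <-.
have YV : Y \subset V.
  apply/subsetP => x xY; move: (subsetP YvV x xY); rewrite in_setU1 ne_v //.
rewrite ne_v //; apply: V_min => // y yY.
by have := u_min y yY; rewrite !ne_v.
Qed.

Lemma ramsey_min_homogeneous l : ramsey_prop l -> forall t, exists N,
  forall (I : finType) (c : {set I} -> A) (W : {set I}), N <= #|W| ->
  exists (V : {set I}) (rho : I -> nat) (chi : I -> A),
    [/\ V \subset W, t <= #|V| & min_homogeneous c V l rho chi].
Proof.
move=> ramsey_l; elim=> [|t [Nt ramsey_t]].
  exists 0 => I c W _; exists set0, (fun _ => 0), (fun _ => c set0).
  by split=> // [|Y v]; [exact: sub0set | rewrite subset0 => /eqP ->; rewrite cards0].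
have [N ramseyN] := ramsey_l Nt.
exists N.+1 => I c W W_large.
have [v vW] : exists v, v \in W by apply/card_gt0P; exact: leq_trans W_large.
have Wv_large : N <= #|W :\ v| by move: W_large; rewrite (cardsD1 v W) vW.
have [H [HWv H_large H_hom]] := ramseyN I (fun Y => c (v |: Y)) (W :\ v) Wv_large.
have [V [rho [chi [VH V_large V_min]]]] := ramsey_t I c H H_large.
have VWv : V \subset W :\ v := subset_trans VH HWv.
have vV : v \notin V by apply/negP => /(subsetP VWv); rewrite !inE eqxx.
exists (v |: V); do 2!eexists; split; last exact: min_homogeneous_add VH H_hom V_min.
  by rewrite subUset sub1set vW (subset_trans VWv (subD1set _ _)).
by rewrite cardsU1 vV.
Qed.

Lemma exists_large_fiber (I : finType) (V : {set I}) (chi : I -> A) h :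
  #|A| * h.-1 < #|V| -> exists a, h <= #|[set x in V | chi x == a]|.
Proof.
move=> V_large; apply/existsP; apply: contraLR V_large; rewrite negb_exists -leqNgt.
move=> /forallP small_fibers; rewrite -sum1_card (partition_big chi predT) //=.
rewrite -sum_nat_const; apply: leq_sum => a _.
by rewrite sum1dep_card -ltnS; case: h small_fibers => [|h] /(_ a); rewrite -ltnNge.
Qed.

Lemma ramsey l : ramsey_prop l.
Proof.
elim: l => [|l IHl] h.
  exists h => I c W W_large; exists W; split=> // Y1 Y2 _ _ /eqP.
  by rewrite cards_eq0 => /eqP -> /eqP; rewrite cards_eq0 => /eqP ->.
have [N ramseyN] := ramsey_min_homogeneous IHl (#|A| * h.-1).+1.
exists N => I c W W_large.
have [V [rho [chi [VW V_large V_min]]]] := ramseyN I c W W_large.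
have [a a_large] := exists_large_fiber chi V_large.
have fiberV : [set x in V | chi x == a] \subset V by apply/subsetP => x; rewrite inE => /andP [].
exists [set x in V | chi x == a]; split=> //; first exact: subset_trans fiberV VW.
suff colored (Y : {set I}) : Y \subset [set x in V | chi x == a] -> #|Y| = l.+1 -> c Y = a.
  by move=> Y1 Y2 *; rewrite !colored.
move=> Y_fiber Y_card.
have [y0 y0Y] : exists y0, y0 \in Y by apply/card_gt0P; rewrite Y_card.
case: (arg_minnP rho y0Y) => u uY u_min.
have /setIdP [_ /eqP <-] := subsetP Y_fiber u uY.
exact: V_min (subset_trans Y_fiber fiberV) Y_card uY u_min.
Qed.

Lemma ramsey_upto L h : exists N,
  forall (I : finType) (c : {set I} -> A) (W : {set I}), N <= #|W| ->
  exists H : {set I}, [/\ H \subset W, h <= #|H| & forall l, l <= L -> homogeneous c H l].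
Proof.
elim: L h => [|L IH] h.
  have [N ramseyN] := ramsey 0 h.
  exists N => I c W W_large; have [H [HW H_large H_hom]] := ramseyN I c W W_large.
  by exists H; split=> // l; rewrite leqn0 => /eqP ->.
have [N1 ramseyN1] := IH h.
have [N ramseyN] := ramsey L.+1 N1.
exists N => I c W W_large.
have [H1 [H1W H1_large H1_hom]] := ramseyN I c W W_large.
have [H [HH1 H_large H_hom]] := ramseyN1 I c H1 H1_large.
exists H; split=> [||l]; [exact: subset_trans HH1 H1W | by [] |].
rewrite leq_eqVlt ltnS => /predU1P [-> | l_le]; last exact: H_hom.
by move=> Y1 Y2 Y1H Y2H; apply: H1_hom; apply: subset_trans HH1.
Qed.

End Ramsey.

Section SetTermCondition.
Variables (A : Type) (I : finType) (n : nat) (F : {set I} -> A).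
Hypothesis F_TC : set_TC n F.

Lemma set_TC_remove (U C W : {set I}) :
  C \subset U -> W \subset U -> [disjoint C & W] -> #|W| = n ->
  (forall D : {set I}, D \subset W -> D != set0 -> F (U :\: D :\: C) = F (U :\: D)) ->
  F (U :\: C) = F U.
Proof.
move=> CU WU CW W_card removeD.
have w_size : size (enum W) = n by rewrite -cardE.
(* Block 0 is [C], the blocks [1..n] are the singletons of [W]. *)
pose blk j : 'I_n.+1 := inord (index j (enum W)).+1.
pose beta j := if j \in C then Some ord0 else if j \in W then Some (blk j) else None.
have blk_ne0 j : j \in W -> blk j != ord0.
  move=> jW; apply/eqP => /(congr1 val); rewrite /= inordK //.
  by rewrite ltnS -w_size index_mem mem_enum.
have blk_onto i : i != ord0 -> exists2 j, j \in W & blk j = i.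
  move=> i_ne0; have i_pos : 0 < i by rewrite lt0n.
  have lt_i : i.-1 < size (enum W) by rewrite w_size -ltnS prednK.
  have [x0 _] : exists x0, x0 \in W.
    by apply/card_gt0P; rewrite W_card -w_size (leq_ltn_trans (leq0n _) lt_i).
  exists (nth x0 (enum W) i.-1); first by rewrite -mem_enum mem_nth.
  by apply: val_inj; rewrite /blk index_uniq ?enum_uniq // prednK //= inordK.
pose D s := [set j in W | ~~ s (blk j)].
have cube_setE s : cube_set beta (U :\: C :\: W) s = U :\: D s :\: (if s ord0 then set0 else C).
  apply/setP => j; rewrite /cube_set /beta !inE.
  case: (boolP (j \in C)) => jC.
    by rewrite (subsetP CU) ?(disjointFr CW jC) //; case: (s ord0); rewrite ?inE ?jC.
  case: (boolP (j \in W)) => jW.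
    by rewrite (subsetP WU) //=; case: (s ord0); rewrite ?inE ?(negbTE jC) negbK andbT.
  by case: (s ord0); rewrite ?inE ?(negbTE jC).
have D_upd0 s b : D (upd0 s b) = D s.
  apply/setP => j; rewrite !inE /upd0; case: (boolP (j \in W)) => //= jW.
  by rewrite (negbTE (blk_ne0 j jW)).
have D_top : D (fun i => i != ord0) = set0.
  by apply/setP => j; rewrite !inE; case: (boolP (j \in W)) => //= /blk_ne0 ->.
have D_true : D (fun _ => true) = set0 by apply/setP => j; rewrite !inE andbF.
have := F_TC (beta := beta) (S := U :\: C :\: W).
rewrite !cube_setE eqxx /= D_top D_true !setD0 => -> // s [i [i_ne0 si]].
rewrite !cube_setE !D_upd0 /upd0 eqxx setD0; apply: removeD.
  by apply/subsetP => j; rewrite inE => /andP [].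
have [j jW blk_j] := blk_onto i i_ne0.
by apply/set0Pn; exists j; rewrite inE jW blk_j si.
Qed.

Lemma set_TC_descend (U C Z : {set I}) k :
  C \subset U -> Z \subset U -> [disjoint Z & C] -> k + n <= #|Z| ->
  (forall Y : {set I}, Y \subset Z -> k <= #|Y| <= k + n -> F (U :\: Y :\: C) = F (U :\: Y)) ->
  F (U :\: C) = F U.
Proof.
move=> CU ZU ZC Z_large layers.
suff /(_ k set0 (sub0set _)) : forall j (Y : {set I}), Y \subset Z -> k <= #|Y| + j ->
    #|Y| <= k + n -> F (U :\: Y :\: C) = F (U :\: Y).
  by rewrite cards0 !setD0 => ->.
elim=> [|j IH] Y YZ kYj Ykn.
  by move: kYj; rewrite addn0 => kY; apply: layers; rewrite ?kY ?Ykn.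
have [kY | Yk] := leqP k #|Y|; first by apply: layers; rewrite ?kY ?Ykn.
have YC : [disjoint Y & C] := disjointWl YZ ZC.
pose W := prefix_set (Z :\: Y) n.
have WZY : W \subset Z :\: Y := prefix_set_sub _ _.
have [WZ WY] : W \subset Z /\ [disjoint W & Y] by move: WZY; rewrite subsetD => /andP.
have W_card : #|W| = n.
  apply: card_prefix_set; rewrite (cardsDS YZ).
  by move: Z_large Yk; clear; lia.
apply: (set_TC_remove (W := W)) => //.
- by rewrite subsetD CU disjoint_sym.
- by rewrite subsetD (subset_trans WZ ZU).
- by rewrite disjoint_sym (disjointWl WZ ZC).
move=> D DW D_ne0; rewrite (setDDl U Y D).
have D_card : 0 < #|D| <= n by rewrite card_gt0 D_ne0 -W_card subset_leq_card.
have YD_card : #|Y :|: D| = #|Y| + #|D|.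
  by rewrite cardsU_disjoint // disjoint_sym (disjointWl DW WY).
apply: IH; first by rewrite subUset YZ (subset_trans DW WZ).
  by rewrite YD_card; move: kYj D_card; clear; lia.
by rewrite YD_card; move: Yk D_card; clear; lia.
Qed.

End SetTermCondition.

Lemma repeated_window (A : finType) n (Phi : nat -> A) : exists k1 k2,
  [/\ k1 < k2, k2 <= #|{ffun 'I_n.+1 -> A}| & forall i, i <= n -> Phi (k1 + i) = Phi (k2 + i)].
Proof.
pose K := #|{ffun 'I_n.+1 -> A}|.
pose window (k : 'I_K.+1) := [ffun i : 'I_n.+1 => Phi (k + i)].
have /injectivePn [x [y xy window_xy]] : ~~ injectiveb window.
  by apply/negP => /injectiveP /leq_card; rewrite card_ord ltnn.
wlog lt_xy : x y xy window_xy / x < y.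
  move=> wlog_lt; case: (ltngtP x y) => [|lt_yx|/val_inj eq_xy]; first exact: wlog_lt.
    by apply: (wlog_lt y x); rewrite // eq_sym.
  by rewrite eq_xy eqxx in xy.
exists x, y; split=> // [|i le_in]; first by rewrite -ltnS.
by have := congr1 (fun w : {ffun 'I_n.+1 -> A} => w (inord i)) window_xy; rewrite !ffunE inordK.
Qed.

(* Ramsey's theorem makes [F (U :\: Y)] depend only on [#|Y|] for small [Y]
   inside a large [H]; two repeated windows of this sequence of values give the
   removable [C] via [set_TC_descend]. *)
Lemma set_TC_removal (A : finType) n : exists R,
  forall (I : finType) (F : {set I} -> A), set_TC n F -> forall U : {set I}, R <= #|U| ->
  exists2 C : {set I}, C \subset U & C != set0 /\ F (U :\: C) = F U.
Proof.
pose K := #|{ffun 'I_n.+1 -> A}|.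
have [N ramseyN] := ramsey_upto A (K + n) (K + K + n).
exists N => I F F_TC U U_large.
have [H [HU H_large H_hom]] := ramseyN I (fun Y => F (U :\: Y)) U U_large.
pose Phi l := F (U :\: prefix_set H l).
have F_Phi (Y : {set I}) : Y \subset H -> #|Y| <= K + n -> F (U :\: Y) = Phi #|Y|.
  move=> YH Y_small; apply: (H_hom #|Y|) => //; first exact: prefix_set_sub.
  by rewrite card_prefix_set // subset_leq_card.
have [k1 [k2 [lt_k12 k2_le period]]] := repeated_window n Phi.
pose C := prefix_set H (k2 - k1).
have CH : C \subset H := prefix_set_sub _ _.
have C_card : #|C| = k2 - k1.
  by apply: card_prefix_set; move: k2_le H_large; rewrite -/K; clear; lia.
exists C; first exact: subset_trans CH HU.
split; first by rewrite -card_gt0 C_card subn_gt0.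
have ZC : [disjoint H :\: C & C] by rewrite disjoints_subset subsetDr.
apply: (set_TC_descend F_TC (Z := H :\: C) (k := k1)) => //.
- exact: subset_trans CH HU.
- exact: subset_trans (subsetDl _ _) HU.
- by rewrite (cardsDS CH) C_card; move: k2_le H_large lt_k12; rewrite -/K; clear; lia.
move=> Y YZ /andP [k1_le le_k1n].
have [YH YC] : Y \subset H /\ [disjoint Y & C] by move: YZ; rewrite subsetD => /andP.
have YC_card : #|Y :|: C| = k2 + (#|Y| - k1).
  by rewrite cardsU_disjoint // C_card; move: lt_k12 k1_le; clear; lia.
rewrite setDDl F_Phi ?subUset ?YH ?YC_card //; last first.
  by move: k2_le le_k1n; rewrite -/K; clear; lia.
rewrite F_Phi //; last by move: k2_le lt_k12 le_k1n; rewrite -/K; clear; lia.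
rewrite -period; first by congr Phi; move: k1_le; clear; lia.
by move: le_k1n; clear; lia.
Qed.

Lemma set_TC_small_support (A : finType) n : exists R,
  forall (I : finType) (F : {set I} -> A), set_TC n F ->
  forall U : {set I}, exists2 T : {set I}, #|T| <= R & F T = F U.
Proof.
have [R removal] := set_TC_removal A n.
exists R => I F F_TC U; have [s U_small] : exists s, #|U| <= s by exists #|U|.
elim: s U U_small => [|s IH] U U_small.
  by exists U; rewrite // (leq_trans U_small).
have [R_le | U_lt] := leqP R #|U|; last by exists U; rewrite // ltnW.
have [C CU [C_ne0 FC]] := removal I F F_TC U R_le.
have [|T T_small FT] := IH (U :\: C); last by exists T; rewrite // FT.
have := C_ne0; rewrite -card_gt0 (cardsDS CU); move: U_small; clear; lia.
Qed.

Lemma bounded_arity_of_TC_eq (A : finType) (Al : alg A) (z : A) n : TC_eq Al n ->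
  exists d, 0 < d /\ forall m (f : ('I_m -> A) -> A), Pol Al f -> forall r : 'I_m -> A,
    exists T : {set 'I_m}, #|T| <= d /\ f r = f (restr z r T).
Proof.
move=> tc; have [R small_support] := set_TC_small_support A n.
exists R.+1; split=> // m f f_pol r.
have [T T_small FT] := small_support _ _ (set_TC_restr (z := z) (r := r) tc f_pol) setT.
exists T; split; first exact: leqW.
rewrite FT /restr; congr f; apply: functional_extensionality => j.
by rewrite in_setT.
Qed.

Theorem mainTheorem3 (A : finType) (Al : alg A) (z : A) :
  has_malcev Al ->
  (supernilpotent Al <->
   exists d : nat, 0 < d /\
     forall (m : nat) (f : ('I_m -> A) -> A), Pol Al f ->
       forall r : 'I_m -> A,
         exists T : {set 'I_m}, #|T| <= d /\ f r = f (restr z r T)).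
Proof.
move=> Al_malcev; split=> [/supernilpotentE [n tc] | [d [_ bounded]]].
  exact: bounded_arity_of_TC_eq tc.
apply/supernilpotentE; exists d.
exact: TC_eq_of_bounded_arity Al_malcev (bounded_arity_fin bounded).
Qed.
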